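(* Let $G$ and $H$ be graphs on the same finite vertex set $V$. If $\mathcal R_0(G)=\mathcal R_0(H)$, then $G=H$.
   Context: A graph means a finite simple graph in which loops are allowed, with adjacency matrix $A$ over $\mathbf F_2$ ($A_{vv}=1$ iff $v$ has a loop). Let $\mathcal V$ be the $\mathbf F_2$-vector space with basis $V$ and $\mathcal E(x,y)=x^TAy$; for $W\subseteq V$, $\langle W\rangle$ is its span and $\langle W\rangle^{\perp\mathcal E}=\{x:\mathcal E(x,w)=0\ \forall w\in\langle W\rangle\}$. $W$ is reducible in $G$ if $\langle W\rangle+\langle W\rangle^{\perp\mathcal E}=\mathcal V$. The nullity of $W$ in $G$ is $|W|$ minus the $\mathbf F_2$-rank of the principal submatrix $A_{W,W}$. The pivotal poset $\mathcal R_0(G)$ is the collection of subsets $W\subseteq V$ that are reducible in $G$ and have nullity $0$ (equivalently, the subsets $W$ with $A_{W,W}$ invertible over $\mathbf F_2$; the empty set is included). *)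

From HB Require Import structures.
From mathcomp Require Import all_boot all_order all_algebra.
Set Implicit Arguments. Unset Strict Implicit. Unset Printing Implicit Defensive.
Import GRing.Theory.
Local Open Scope ring_scope.

Section Pivotal.
Variable V : finType.

(* A graph on V (loops allowed, no multi-edges) is a symmetric relation e.
   Its adjacency matrix over F_2: A u v = 1 iff e u v (A v v = 1 iff loop at v). *)
Definition graph_sym (e : rel V) : Prop := symmetric e.

Definition adj (e : rel V) (u v : V) : 'F_2 := (e u v)%:R.

(* The F_2-vector space with basis V: functions V -> F_2 (basis vector of v = indicator of v). *)
Notation vec := {ffun V -> 'F_2}.

Definition bilE (e : rel V) (x y : vec) : 'F_2 :=
  \sum_(u : V) \sum_(v : V) x u * adj e u v * y v.

Definition in_span (W : {set V}) (x : vec) : Prop :=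
  exists c : V -> 'F_2, x = [ffun v => \sum_(w in W) c w * (w == v)%:R].

Definition in_perp (e : rel V) (W : {set V}) (x : vec) : Prop :=
  forall w : vec, in_span W w -> bilE e x w = 0.

Definition reducible (e : rel V) (W : {set V}) : Prop :=
  forall z : vec, exists x y : vec, [/\ in_span W x, in_perp e W y & z = x + y].

Definition principal_submx (e : rel V) (W : {set V}) : 'M['F_2]_#|W| :=
  \matrix_(i, j) adj e (enum_val i) (enum_val j).

Definition nullity (e : rel V) (W : {set V}) : nat :=
  (#|W| - \rank (principal_submx e W))%N.

Definition in_R0 (e : rel V) (W : {set V}) : Prop :=
  reducible e W /\ nullity e W = 0%N.

End Pivotal.

From HB Require Import structures.
From mathcomp Require Import all_boot all_order all_algebra.
Set Implicit Arguments. Unset Strict Implicit. Unset Printing Implicit Defensive.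
Import GRing.Theory.

(* The proof first identifies R_0(G) with the family of vertex sets W whose
   principal submatrix A_{W,W} is invertible over F_2.  Nullity 0 says exactly
   that A_{W,W} has full rank; reducibility is then automatic, because if
   A_{W,W} is invertible every vector z splits as z = x + (z - x) with x in <W>
   chosen by solving the linear system "x A agrees with z A on the columns
   of W", which puts z - x in <W>^{perp E}.

   Next, the singletons and pairs in R_0 are read off from 1 x 1 and 2 x 2
   determinants: {v} is in R_0 iff v carries a loop, and for u <> v the pair
   {u, v} is in R_0 iff (u and v both carry loops) xor (uv is an edge).
   So if R_0(G) = R_0(H), the singletons show that G and H have the same loops,
   and the pairs then show that they have the same edges. *)

Local Open Scope ring_scope.

Section Pivotal.
Variable V : finType.
Notation vec := {ffun V -> 'F_2}.
Implicit Types (e : rel V) (W : {set V}).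

Lemma span_coord W (c : V -> 'F_2) v :
  [ffun v => \sum_(w in W) c w * (w == v)%:R] v = if v \in W then c v else 0.
Proof.
rewrite ffunE; case: ifP => vW.
  rewrite (bigD1 v) //= eqxx mulr1 big1 ?addr0 // => w /andP[_ /negbTE ->].
  by rewrite mulr0.
rewrite big1 // => w wW; case: eqP => [ew|_]; last by rewrite mulr0.
by rewrite -ew wW in vW.
Qed.

Lemma in_spanP W (x : vec) : in_span W x <-> {in [predC W], forall v, x v = 0}.
Proof.
split=> [[c ->] v /negbTE vW | x0]; first by rewrite span_coord vW.
exists x; apply/ffunP => v; rewrite span_coord; case: ifPn => // vW.
by rewrite x0.
Qed.

Lemma bilE_span e W (y : vec) (d : V -> 'F_2) :
  bilE e y [ffun v => \sum_(w in W) d w * (w == v)%:R]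
  = \sum_(v in W) (\sum_u y u * adj e u v) * d v.
Proof.
rewrite /bilE exchange_big /= (bigID (mem W)) /= [X in _ + X]big1 ?addr0.
  by apply: eq_bigr => v vW; rewrite span_coord vW mulr_suml.
by move=> v vW; rewrite span_coord (negbTE vW); apply: big1 => u _; rewrite mulr0.
Qed.

Lemma in_perp_columns e W (y : vec) :
  {in W, forall v, \sum_u y u * adj e u v = 0} -> in_perp e W y.
Proof.
move=> y0 _ [d ->]; rewrite bilE_span big1 // => v vW.
by rewrite y0 // mul0r.
Qed.

Lemma solve_on_columns e W (z : vec) :
  principal_submx e W \in unitmx ->
  exists2 x : vec, in_span W x &
    {in W, forall v, \sum_u x u * adj e u v = \sum_u z u * adj e u v}.
Proof.
move=> unitM.
pose r := \row_(j < #|W|) \sum_u z u * adj e u (enum_val j).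
pose c := r *m invmx (principal_submx e W).
pose x : vec := [ffun u => \sum_(i < #|W|) c 0 i * (enum_val i == u)%:R].
exists x.
  apply/in_spanP => u uW; rewrite ffunE big1 // => i _.
  by case: eqP => [ei|_]; [move: uW; rewrite -ei inE enum_valP | rewrite mulr0].
move=> v vW; rewrite -(enum_rankK_in vW vW); set j := enum_rank_in vW v.
have : (c *m principal_submx e W) 0 j = r 0 j by rewrite mulmxKV.
rewrite !mxE => <-; under eq_bigr do rewrite ffunE mulr_suml.
rewrite exchange_big /=; apply: eq_bigr => i _; rewrite [principal_submx e W i j]mxE.
rewrite (bigD1 (enum_val i)) //= eqxx mulr1 big1 ?addr0 // => u /negbTE.
by rewrite eq_sym => ->; rewrite mulr0 mul0r.
Qed.

Lemma unit_reducible e W : principal_submx e W \in unitmx -> reducible e W.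
Proof.
move=> unitM z; have [x xW xA] := solve_on_columns z unitM.
exists x, (z - x); split=> //; last by rewrite addrC subrK.
apply: in_perp_columns => v vW.
rewrite -[RHS](subrr (\sum_u z u * adj e u v)) -{2}(xA v vW) -sumrB.
by apply: eq_bigr => u _; rewrite !ffunE mulrBl.
Qed.

Lemma in_R0_unit e W : in_R0 e W <-> principal_submx e W \in unitmx.
Proof.
split=> [[_] | unitM]; last split; last first.
- by move: unitM; rewrite -row_free_unit /nullity => /eqP ->; rewrite subnn.
- exact: unit_reducible.
rewrite -row_free_unit /row_free /nullity => /eqP.
by rewrite subn_eq0 eqn_leq rank_leq_row => ->.
Qed.

Lemma det_mx2 (R : comNzRingType) (A : 'M[R]_2) :
  \det A = A 0 0 * A 1 1 - A 0 1 * A 1 0.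
Proof.
rewrite (expand_det_row _ 0) !big_ord_recl big_ord0 /cofactor !det_mx11 !mxE /=.
rewrite expr0 expr1 mul1r mulN1r addr0 mulrN.
by congr (A _ _ * A _ _ - A _ _ * A _ _); apply/val_inj.
Qed.

Lemma det_pair_matrix n (f : 'I_n -> V) (g : V -> V -> 'F_2) a b :
  n = 2%N -> injective f -> (forall i, f i = a \/ f i = b) ->
  \det (\matrix_(i, j) g (f i) (f j) : 'M_n) = g a a * g b b - g a b * g b a.
Proof.
move=> n2 f_inj fab; subst n; rewrite det_mx2 !mxE.
have f01 : f 0 != f 1 by apply/eqP => /f_inj.
by case: (fab 0) (fab 1) f01 => -> [] -> //; rewrite ?eqxx // mulrC [g b a * _]mulrC.
Qed.

Lemma unit_singleton e v : (principal_submx e [set v] \in unitmx) = e v v.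
Proof.
rewrite unitmxE unitfE.
have one : #|[set v]| = 1%N by rewrite cards1.
rewrite /principal_submx; move: (enum_val (A := [set v])) (@enum_valP _ [set v]).
rewrite one => f fv; rewrite det_mx11 mxE.
have -> : f 0 = v by apply/set1P; exact: fv.
by rewrite /adj; case: (e v v).
Qed.

(* For u <> v, {u, v} is in R_0 exactly when (both vertices carry loops)
   xor (uv is an edge): over F_2 the determinant is e_uu e_vv - e_uv^2. *)
Lemma unit_pair e u v : symmetric e -> u != v ->
  (principal_submx e [set u; v] \in unitmx) = (e u u && e v v) (+) e u v.
Proof.
move=> e_sym uv; rewrite unitmxE unitfE (det_pair_matrix _ _ (a := u) (b := v)).
- by rewrite /adj (e_sym v u); case: (e u u); case: (e v v); case: (e u v).
- by rewrite cards2 uv.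
- exact: enum_val_inj.
by move=> i; move: (enum_valP i); rewrite in_set2 => /orP[] /eqP; [left|right].
Qed.

End Pivotal.

Theorem mainTheorem7 (V : finType) (eG eH : rel V) :
  graph_sym eG -> graph_sym eH ->
  (forall W : {set V}, in_R0 eG W <-> in_R0 eH W) ->
  eG =2 eH.
Proof.
move=> symG symH sameR0.
have same_unit W :
    (principal_submx eG W \in unitmx) = (principal_submx eH W \in unitmx).
  by apply/idP/idP => /in_R0_unit/sameR0/in_R0_unit.
have same_loops v : eG v v = eH v v by rewrite -!unit_singleton same_unit.
move=> u v; have [<-|uv] := eqVneq u v; first exact: same_loops.
have := same_unit [set u; v]; rewrite !unit_pair // -!same_loops.
exact: addbI.
Qed.
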